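(* Let $V\subset\mathbb{R}^3$ be covered by a conforming oriented tetrahedral mesh $\bigcup_e T_e$, let $p\ge2$, and on each element consider the edge, edge-face, face and cell functions listed below, assembled globally so that edge functions are shared by all elements containing that edge, face functions (including edge-face functions of that face) by the two elements sharing that face, and cell functions are local to each element. Then every finite linear combination of the assembled functions lies in $H(\operatorname{sym}\operatorname{Curl},V)$; equivalently, for every interior interface $\Xi$ between two elements with normal $\mathbf{n}$, the jump of $\operatorname{sym}(\mathbf{P}\operatorname{Anti}(\mathbf{n})^T)$ across $\Xi$ vanishes. The element functions on $T$ are: (i) for each edge $j$ and $\varphi\in\mathcal{E}^p_j(T)$: $\varphi\,\mathbf{d}_1\otimes\mathbf{t}$, $\varphi\,\mathbf{d}_2\otimes\mathbf{t}$; (ii) for each face $k$ with normal $\mathbf{n}$, each edge $j$ of face $k$ and $\varphi\in\mathcal{E}^p_j(T)$: $\varphi\,\mathbf{t}\otimes\mathbf{k}$, $\varphi\,\mathbf{m}\otimes\mathbf{k}$, $\varphi\,\mathbf{n}\otimes\mathbf{k}$, with $\mathbf{t}$ the tangent of edge $j$, $\mathbf{k}$ the edge-face vector of edge $j$ satisfying $\mathbf{n}\times\mathbf{k}\ne0$, $\mathbf{m}=\mathbf{Q}\mathbf{k}$, $\mathbf{Q}=\|\mathbf{n}\|^2\mathbb{1}-\mathbf{n}\otimes\mathbf{n}$; (iii) for each face $k$ and $\varphi\in\mathcal{F}^p_k(T)$, with $j=\min\mathcal{J}_k$ and $\mathbf{t},\mathbf{m}$ as in (ii) for edge $j$: $\varphi\,\mathbf{t}\otimes\mathbf{m}$,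 $\varphi\,\mathbf{m}\otimes\mathbf{t}$, $\varphi(\mathbf{t}\otimes\mathbf{t}-\mathbf{m}\otimes\mathbf{m})$, $\varphi\,\mathbf{n}\otimes\mathbf{t}$, $\varphi\,\mathbf{n}\otimes\mathbf{m}$; (iv) cell functions $\varphi\mathbb{1}$ with $\varphi\in\bigoplus_{j}\mathcal{E}^{p+1}_j(T)\oplus\bigoplus_k\mathcal{F}^{p+1}_k(T)\oplus\mathcal{C}^{p+1}(T)$, $\varphi\,\mathbf{t}\otimes\mathbf{n}$, $\varphi\,\mathbf{m}\otimes\mathbf{n}$, $\varphi\,\mathbf{n}\otimes\mathbf{n}$ with $\varphi\in\mathcal{F}^p_k(T)$ (vectors as in (iii)), and $\varphi\mathbf{T}$ with $\varphi\in\mathcal{C}^p(T)$, $\mathbf{T}\in\mathfrak{sl}(3)$.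
   Context: $H(\operatorname{sym}\operatorname{Curl},V)=\{\mathbf{P}\in[L^2(V)]^{3\times3}:\operatorname{sym}\operatorname{Curl}\mathbf{P}\in[L^2(V)]^{3\times3}\}$, where $\operatorname{Curl}\mathbf{P}=-\mathbf{P}\times\nabla$ is the row-wise curl and $\operatorname{sym}\mathbf{A}=\frac12(\mathbf{A}+\mathbf{A}^T)$; $\operatorname{Anti}(\mathbf{v})$ is the skew matrix with $\operatorname{Anti}(\mathbf{v})\mathbf{w}=\mathbf{v}\times\mathbf{w}$; $\mathfrak{sl}(3)$ is the space of trace-free $3\times3$ matrices, $\mathbb{1}$ the identity. Each element $T=\mathbf{x}(\Omega)$ is the non-degenerate image of the reference tetrahedron $\Omega=\{(\xi,\eta,\zeta)\in[0,1]^3:\xi+\eta+\zeta\le1\}$, $\mathbf{J}=\mathrm{D}\mathbf{x}$, with barycentric coordinates $\lambda_1=1-\xi-\eta-\zeta,\lambda_2=\zeta,\lambda_3=\eta,\lambda_4=\xi$. The mesh is oriented: the local vertex numbering of each element is increasing with respect to a fixed global vertex numbering. Edges $\mathcal{J}=\{(1,2),(1,3),(1,4),(2,3),(2,4),(3,4)\}$, faces $\mathcal{K}=\{(1,2,3),(1,2,4),(1,3,4),(2,3,4)\}$, $\mathcal{J}_k$ the edges of face $k$, $\min\mathcal{J}_k$ the lexicographically smallest. Scalar spaces: an $H^1$-conforming hierarchical polytopal basis of $\mathit{P}^q(T)$ consisting of vertex functions $\lambda_i$, edge spaces $\mathcal{E}^q_j(T)$ (dimension $q-1$, vanishing on other edges),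 face spaces $\mathcal{F}^q_k(T)$ (dimension $(q-2)(q-1)/2$, vanishing on other faces), cell space $\mathcal{C}^q(T)$ (dimension $(q-3)(q-2)(q-1)/6$, vanishing on $\partial T$), such that shared edge and face functions coincide on interfaces between neighbouring elements. Vectors: tangents $\mathbf{t}=\mathbf{J}\boldsymbol{\tau}$ with $\boldsymbol{\tau}_{12}=\mathbf{e}_3,\boldsymbol{\tau}_{13}=\mathbf{e}_2,\boldsymbol{\tau}_{14}=\mathbf{e}_1,\boldsymbol{\tau}_{23}=\mathbf{e}_2-\mathbf{e}_3,\boldsymbol{\tau}_{24}=\mathbf{e}_1-\mathbf{e}_3,\boldsymbol{\tau}_{34}=\mathbf{e}_1-\mathbf{e}_2$; edge-face vectors $\mathbf{k}=\mathbf{J}^{-T}\boldsymbol{\kappa}$ with reference pairs $(1,2):\{-\mathbf{e}_2,-\mathbf{e}_1\}$, $(1,3):\{\mathbf{e}_3,-\mathbf{e}_1\}$, $(1,4):\{\mathbf{e}_3,\mathbf{e}_2\}$, $(2,3):\{\mathbf{e}_1+\mathbf{e}_2+\mathbf{e}_3,-\mathbf{e}_1\}$, $(2,4):\{\mathbf{e}_1+\mathbf{e}_2+\mathbf{e}_3,\mathbf{e}_2\}$, $(3,4):\{\mathbf{e}_1+\mathbf{e}_2+\mathbf{e}_3,-\mathbf{e}_3\}$; face normals $\mathbf{n}=(\det\mathbf{J})\mathbf{J}^{-T}\boldsymbol{\nu}$ with $\boldsymbol{\nu}_{123}=-\mathbf{e}_1,\boldsymbol{\nu}_{124}=\mathbf{e}_2,\boldsymbol{\nu}_{134}=-\mathbf{e}_3,\boldsymbol{\nu}_{234}=-\mathbf{e}_1-\mathbf{e}_2-\mathbf{e}_3$;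 for an edge with tangent $\mathbf{t}=(t_1,t_2,t_3)$, $\mathbf{d}_2=(\operatorname{sgn}_*(t_1)|t_3|,\operatorname{sgn}_*(t_2)|t_3|,-\operatorname{sgn}_*(t_3)(|t_1|+|t_2|))^T$ with $\operatorname{sgn}_*(x)=1$ if $x\ge0$, $-1$ otherwise, and $\mathbf{d}_1=\mathbf{d}_2\times\mathbf{t}$. *)

From HB Require Import structures.
From mathcomp Require Import all_boot all_order all_algebra.
Set Implicit Arguments. Unset Strict Implicit. Unset Printing Implicit Defensive.
Import Order.TTheory GRing.Theory Num.Theory.
Local Open Scope ring_scope.

Section Linalg.
Variable R : realFieldType.
Local Notation vec := 'cV[R]_3.

(* i-th component (0-based) of a vector of R^3 *)
Definition cmp (v : vec) (i : nat) : R := v (inord i) ord0.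
Definition mkv (a b c : R) : vec :=
  \col_(i < 3) (if val i == 0%N then a else if val i == 1%N then b else c).
Definition ref_e1 : vec := mkv 1 0 0.
Definition ref_e2 : vec := mkv 0 1 0.
Definition ref_e3 : vec := mkv 0 0 1.
Definition ref_e123 : vec := ref_e1 + ref_e2 + ref_e3.

Definition cross (u v : vec) : vec :=
  mkv (cmp u 1 * cmp v 2 - cmp u 2 * cmp v 1)
      (cmp u 2 * cmp v 0 - cmp u 0 * cmp v 2)
      (cmp u 0 * cmp v 1 - cmp u 1 * cmp v 0).
(* Anti v is the matrix with Anti v w = v x w : its j-th column is v x e_j *)
Definition Anti (v : vec) : 'M[R]_3 :=
  \matrix_(i < 3, j < 3) (cross v (delta_mx j ord0)) i ord0.
Definition symm (A : 'M[R]_3) : 'M[R]_3 := 2^-1 *: (A + A^T).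
Definition tens (a b : vec) : 'M[R]_3 := a *m b^T.
Definition sgnS (x : R) : R := if 0 <= x then 1 else -1.
Definition dvec2 (t : vec) : vec :=
  mkv (sgnS (cmp t 0) * `|cmp t 2|) (sgnS (cmp t 1) * `|cmp t 2|)
      (- (sgnS (cmp t 2) * (`|cmp t 0| + `|cmp t 1|))).
Definition dvec1 (t : vec) : vec := cross (dvec2 t) t.
Definition sqnorm (n : vec) : R := (n^T *m n) ord0 ord0.
Definition Qm (n : vec) : 'M[R]_3 := sqnorm n *: 1%:M - tens n n.

Definition Jlist : seq (nat * nat) := [:: (1,2); (1,3); (1,4); (2,3); (2,4); (3,4)]%N.
Definition Klist : seq (nat * nat * nat) := [:: (1,2,3); (1,2,4); (1,3,4); (2,3,4)]%N.
(* local vertices are 'I_4, local vertex a (1-based) is inord a.-1 *)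
Definition edge_verts (j : 'I_6) : 'I_4 * 'I_4 :=
  let: (a, b) := nth (1,2)%N Jlist j in (inord a.-1, inord b.-1).
Definition face_verts (k : 'I_4) : 'I_4 * 'I_4 * 'I_4 :=
  let: (a, b, c) := nth (1,2,3)%N Klist k in (inord a.-1, inord b.-1, inord c.-1).
Definition face_edge (k : 'I_4) (r : 'I_3) : 'I_6 :=
  let: (a, b, c) := nth (1,2,3)%N Klist k in
  inord (index (nth (a, b) [:: (a, b); (a, c); (b, c)] r) Jlist).
(* min J_k : the lexicographically smallest edge of face (a,b,c), a<b<c, is (a,b) *)
Definition min_face_edge (k : 'I_4) : 'I_6 := face_edge k (inord 0).
Definition tau (j : 'I_6) : vec :=
  nth 0 [:: ref_e3; ref_e2; ref_e1; ref_e2 - ref_e3; ref_e1 - ref_e3; ref_e1 - ref_e2] j.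
Definition kap1 (j : 'I_6) : vec :=
  nth 0 [:: - ref_e2; ref_e3; ref_e3; ref_e123; ref_e123; ref_e123] j.
Definition kap2 (j : 'I_6) : vec :=
  nth 0 [:: - ref_e1; - ref_e1; ref_e2; - ref_e1; ref_e2; - ref_e3] j.
Definition nu (k : 'I_4) : vec :=
  nth 0 [:: - ref_e1; ref_e2; - ref_e3; - ref_e123] k.
Definition refOmega (xi : vec) : Prop :=
  [/\ 0 <= cmp xi 0, 0 <= cmp xi 1, 0 <= cmp xi 2 & cmp xi 0 + cmp xi 1 + cmp xi 2 <= 1].

Definition dimE (q : nat) : nat := q.-1.
Definition dimF (q : nat) : nat := ((q - 2) * (q - 1)) %/ 2.
Definition dimC (q : nat) : nat := ((q - 3) * (q - 2) * (q - 1)) %/ 6.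

Definition isPoly (q : nat) (f : vec -> R) : Prop :=
  exists c : nat -> nat -> nat -> R, forall x,
    f x = \sum_(a < q.+1) \sum_(b < q.+1) \sum_(d < q.+1)
            (if (a + b + d <= q)%N
             then c a b d * cmp x 0 ^+ a * cmp x 1 ^+ b * cmp x 2 ^+ d else 0).

(* ---- the mesh: N global vertices with coordinates X, M elements with
   global vertex numbers gv e (local vertex -> global vertex) ---- *)
Variables (N M : nat) (X : 'I_N -> vec) (gv : 'I_M -> 'I_4 -> 'I_N).

Definition vtx (e : 'I_M) (a : nat) : vec := X (gv e (inord a.-1)).  (* 1-based *)
Definition xmap (e : 'I_M) (xi : vec) : vec :=
  (1 - cmp xi 0 - cmp xi 1 - cmp xi 2) *: vtx e 1 + cmp xi 2 *: vtx e 2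
  + cmp xi 1 *: vtx e 3 + cmp xi 0 *: vtx e 4.
Definition tet (e : 'I_M) (x : vec) : Prop := exists2 xi, refOmega xi & x = xmap e xi.
(* J = Dx : columns d x/d xi, d x/d eta, d x/d zeta *)
Definition Jm (e : 'I_M) : 'M[R]_3 :=
  \matrix_(i < 3, j < 3)
    (if val j == 0%N then vtx e 4 - vtx e 1
     else if val j == 1%N then vtx e 3 - vtx e 1 else vtx e 2 - vtx e 1) i ord0.
Definition JiT (e : 'I_M) : 'M[R]_3 := (invmx (Jm e))^T.
Definition tvec (e : 'I_M) (j : 'I_6) : vec := Jm e *m tau j.
Definition nvec (e : 'I_M) (k : 'I_4) : vec := \det (Jm e) *: (JiT e *m nu k).
Definition kvec (e : 'I_M) (k : 'I_4) (j : 'I_6) : vec :=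
  let k1 := JiT e *m kap1 j in let k2 := JiT e *m kap2 j in
  if cross (nvec e k) k1 != 0 then k1 else k2.
Definition mvec (e : 'I_M) (k : 'I_4) (j : 'I_6) : vec := Qm (nvec e k) *m kvec e k j.
(* barycentric coordinates lambda_1..lambda_4 of a physical point *)
Definition lam (e : 'I_M) (a : 'I_4) (x : vec) : R :=
  let xi := invmx (Jm e) *m (x - vtx e 1) in
  if val a == 0%N then 1 - cmp xi 0 - cmp xi 1 - cmp xi 2
  else if val a == 1%N then cmp xi 2 else if val a == 2%N then cmp xi 1 else cmp xi 0.

Definition gedge (e : 'I_M) (j : 'I_6) : 'I_N * 'I_N :=
  let: (a, b) := edge_verts j in (gv e a, gv e b).
Definition gface (e : 'I_M) (k : 'I_4) : 'I_N * 'I_N * 'I_N :=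
  let: (a, b, c) := face_verts k in (gv e a, gv e b, gv e c).
Definition vset (e : 'I_M) : {set 'I_N} := [set gv e a | a : 'I_4].
(* convex hull of the global vertices in S (empty if S is empty) *)
Definition hullS (S : {set 'I_N}) (x : vec) : Prop :=
  exists w : 'I_N -> R, [/\ forall g, 0 <= w g, forall g, g \notin S -> w g = 0,
     \sum_g w g = 1 & x = \sum_g w g *: X g].
Definition edgeSet (e : 'I_M) (j : 'I_6) : vec -> Prop :=
  hullS [set gv e (edge_verts j).1; gv e (edge_verts j).2].
Definition faceSet (e : 'I_M) (k : 'I_4) : vec -> Prop :=
  hullS [set gv e (face_verts k).1.1; gv e (face_verts k).1.2; gv e (face_verts k).2].

(* conforming, oriented, non-degenerate tetrahedral mesh *)
Definition mesh_ok : Prop :=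
  [/\ forall e (a b : 'I_4), (a < b)%N -> (gv e a < gv e b)%N,
      forall e, \det (Jm e) != 0,
      forall e e', gv e =1 gv e' -> e = e'
    & forall e e' x, (tet e x /\ tet e' x) <-> hullS (vset e :&: vset e') x].

(* scalar edge / face / cell functions: degree q, element, local entity, index *)
Record scalarFam := ScalarFam {
  sE : nat -> 'I_M -> 'I_6 -> nat -> vec -> R;
  sF : nat -> 'I_M -> 'I_4 -> nat -> vec -> R;
  sC : nat -> 'I_M -> nat -> vec -> R }.

Definition comb (S : scalarFam) (q : nat) (e : 'I_M) (cv : 'I_4 -> R)
  (ce : 'I_6 -> nat -> R) (cf : 'I_4 -> nat -> R) (cc : nat -> R) (x : vec) : R :=
  \sum_(a < 4) cv a * lam e a x
  + \sum_(j < 6) \sum_(i < dimE q) ce j i * sE S q e j i x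
  + \sum_(k < 4) \sum_(i < dimF q) cf k i * sF S q e k i x
  + \sum_(i < dimC q) cc i * sC S q e i x.

Definition basis_q (S : scalarFam) (q : nat) (e : 'I_M) : Prop :=
  [/\ (forall j (i : nat), (i < dimE q)%N -> isPoly q (sE S q e j i)),
      (forall k (i : nat), (i < dimF q)%N -> isPoly q (sF S q e k i)),
      (forall (i : nat), (i < dimC q)%N -> isPoly q (sC S q e i)),
      (forall cv ce cf cc, (forall x, tet e x -> comb S q e cv ce cf cc x = 0) ->
         [/\ forall a, cv a = 0,
             forall j (i : nat), (i < dimE q)%N -> ce j i = 0,
             forall k (i : nat), (i < dimF q)%N -> cf k i = 0
           & forall (i : nat), (i < dimC q)%N -> cc i = 0])
    & (forall f, isPoly q f -> exists cv ce cf cc,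
         forall x, tet e x -> f x = comb S q e cv ce cf cc x)].

Definition polytopal_q (S : scalarFam) (q : nat) (e : 'I_M) : Prop :=
  [/\ (forall j (i : nat), (i < dimE q)%N ->
         (forall j', j' != j -> forall x, edgeSet e j' x -> sE S q e j i x = 0) /\
         (forall k, (forall r, face_edge k r != j) ->
            forall x, faceSet e k x -> sE S q e j i x = 0)),
      (forall k (i : nat), (i < dimF q)%N ->
         forall k', k' != k -> forall x, faceSet e k' x -> sF S q e k i x = 0)
    & (forall (i : nat), (i < dimC q)%N ->
         forall k x, faceSet e k x -> sC S q e i x = 0)].

Definition shared_q (S : scalarFam) (q : nat) : Prop :=
  forall e e' k k', gface e k = gface e' k' -> forall x, faceSet e k x ->
    (forall r (i : nat), (i < dimE q)%N ->
        sE S q e (face_edge k r) i x = sE S q e' (face_edge k' r) i x) /\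
    (forall (i : nat), (i < dimF q)%N -> sF S q e k i x = sF S q e' k' i x).

Definition hierarchical (S : scalarFam) (p : nat) : Prop :=
  [/\ forall e j (i : nat), (i < dimE p)%N -> sE S p.+1 e j i = sE S p e j i,
      forall e k (i : nat), (i < dimF p)%N -> sF S p.+1 e k i = sF S p e k i
    & forall e (i : nat), (i < dimC p)%N -> sC S p.+1 e i = sC S p e i].

Definition scalar_ok (S : scalarFam) (p : nat) : Prop :=
  hierarchical S p /\
  forall q, (q == p) || (q == p.+1) ->
    (forall e, basis_q S q e /\ polytopal_q S q e) /\ shared_q S q.

(* coefficients of a finite linear combination of the assembled functions:
   edge and face functions are indexed by global edges / faces (shared),
   cell functions by elements (local). *)
Record coeffs := Coeffs {
  aE  : 'I_N * 'I_N -> nat -> nat -> R;                  (* (i): d1, d2 *)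
  aEF : 'I_N * 'I_N * 'I_N -> 'I_N * 'I_N -> nat -> nat -> R; (* (ii): t,m,n (x) k *)
  aF  : 'I_N * 'I_N * 'I_N -> nat -> nat -> R;           (* (iii): five kinds *)
  aCE : 'I_M -> 'I_6 -> nat -> R;                         (* (iv): phi 1, phi in E^{p+1}_j *)
  aCF : 'I_M -> 'I_4 -> nat -> R;                         (* (iv): phi 1, phi in F^{p+1}_k *)
  aCC : 'I_M -> nat -> R;                                 (* (iv): phi 1, phi in C^{p+1} *)
  aCn : 'I_M -> 'I_4 -> nat -> nat -> R;                  (* (iv): t,m,n (x) n *)
  aCT : 'I_M -> nat -> 'M[R]_3 }.                         (* (iv): phi T, T in sl(3) *)

Definition coeffs_ok (A : coeffs) (p : nat) : Prop :=
  forall e (i : nat), (i < dimC p)%N -> \tr (aCT A e i) = 0.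

Definition Pelem (S : scalarFam) (A : coeffs) (p : nat) (e : 'I_M) (x : vec) : 'M[R]_3 :=
  \sum_(j < 6) \sum_(i < dimE p)
     (let t := tvec e j in
      sE S p e j i x *: (aE A (gedge e j) i 0 *: tens (dvec1 t) t
                        + aE A (gedge e j) i 1 *: tens (dvec2 t) t))
  + \sum_(k < 4) \sum_(r < 3) \sum_(i < dimE p)
     (let j := face_edge k r in
      let t := tvec e j in let kk := kvec e k j in
      let m := mvec e k j in let n := nvec e k in
      sE S p e j i x *: (aEF A (gface e k) (gedge e j) i 0 *: tens t kk
                        + aEF A (gface e k) (gedge e j) i 1 *: tens m kk
                        + aEF A (gface e k) (gedge e j) i 2 *: tens n kk))
  + \sum_(k < 4) \sum_(i < dimF p)
     (let j := min_face_edge k in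
      let t := tvec e j in let m := mvec e k j in let n := nvec e k in
      sF S p e k i x *: (aF A (gface e k) i 0 *: tens t m
                        + aF A (gface e k) i 1 *: tens m t
                        + aF A (gface e k) i 2 *: (tens t t - tens m m)
                        + aF A (gface e k) i 3 *: tens n t
                        + aF A (gface e k) i 4 *: tens n m))
  + \sum_(j < 6) \sum_(i < dimE p.+1) (sE S p.+1 e j i x * aCE A e j i) *: 1%:M
  + \sum_(k < 4) \sum_(i < dimF p.+1) (sF S p.+1 e k i x * aCF A e k i) *: 1%:M
  + \sum_(i < dimC p.+1) (sC S p.+1 e i x * aCC A e i) *: 1%:M
  + \sum_(k < 4) \sum_(i < dimF p)
     (let j := min_face_edge k in
      let t := tvec e j in let m := mvec e k j in let n := nvec e k in
      sF S p e k i x *: (aCn A e k i 0 *: tens t n + aCn A e k i 1 *: tens m n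
                        + aCn A e k i 2 *: tens n n))
  + \sum_(i < dimC p) sC S p e i x *: aCT A e i.

End Linalg.

From HB Require Import structures.
From mathcomp Require Import all_boot all_order all_algebra.
From mathcomp Require Import ring lra.
Import GRing.Theory Num.Theory.
Set Implicit Arguments.
Unset Strict Implicit.
Unset Printing Implicit Defensive.
Local Open Scope ring_scope.

(* On a face with normal n the jump quantity P |-> sym(P Anti(n)^T) is linear and maps
   a (x) b to sym(a (x) (n x b)); it kills multiples of the identity and every a (x) n.
   Restricted to the face, the polytopal scalar functions of the cell, of the other faces
   and of the edges off the face vanish, and an edge-face function of a neighbouring face
   contributes nothing because its vector k is parallel to n.  What remains are the edge,
   edge-face and face functions of the face itself.  Their tangents t and the normal n
   are differences and cross products of global vertices (the mesh is oriented), and the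
   edge-face vectors are normalised so that n x k = t, whence also m = Q k = - n x t.
   Hence both elements yield the same expression in the shared scalar functions. *)

Section Components.
Variable R : realFieldType.
Local Notation vec := 'cV[R]_3.
Implicit Types (u v n : vec) (M : 'M[R]_3) (x y z : R).
Local Notation "M `_( i , j )" := (M (inord i) (inord j))
  (at level 3, format "M `_( i ,  j )").

Lemma ord3P (i : 'I_3) : [\/ i = inord 0, i = inord 1 | i = inord 2].
Proof.
by case: i => -[|[|[|//]]] ? ; [constructor 1|constructor 2|constructor 3];
  apply/val_inj; rewrite /= inordK.
Qed.

Lemma eq_vec u v :
  cmp u 0 = cmp v 0 -> cmp u 1 = cmp v 1 -> cmp u 2 = cmp v 2 -> u = v.
Proof.
by move=> h0 h1 h2; apply/matrixP=> i j; rewrite (ord1 j); case: (ord3P i) => ->.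
Qed.

Lemma cmp_mkv0 x y z : cmp (mkv x y z) 0 = x. Proof. by rewrite /cmp mxE /= inordK. Qed.
Lemma cmp_mkv1 x y z : cmp (mkv x y z) 1 = y. Proof. by rewrite /cmp mxE /= inordK. Qed.
Lemma cmp_mkv2 x y z : cmp (mkv x y z) 2 = z. Proof. by rewrite /cmp mxE /= inordK. Qed.
Lemma cmpD u v i : cmp (u + v) i = cmp u i + cmp v i. Proof. by rewrite /cmp mxE. Qed.
Lemma cmpN u i : cmp (- u) i = - cmp u i. Proof. by rewrite /cmp mxE. Qed.
Lemma cmpZ x u i : cmp (x *: u) i = x * cmp u i. Proof. by rewrite /cmp mxE. Qed.
Lemma cmp0 i : cmp (0 : vec) i = 0. Proof. by rewrite /cmp mxE. Qed.

Definition cmpE := (cmpD, cmpN, cmpZ, cmp0, cmp_mkv0, cmp_mkv1, cmp_mkv2).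

Lemma cmp_delta (i j : nat) : (i < 3)%N -> (j < 3)%N ->
  cmp (delta_mx (inord j) ord0 : vec) i = (i == j)%:R.
Proof. by move=> hi hj; rewrite /cmp mxE -val_eqE /= !inordK // andbT. Qed.

Lemma sum_ord3 (F : 'I_3 -> R) :
  \sum_(j < 3) F j = F (inord 0) + F (inord 1) + F (inord 2).
Proof.
rewrite !big_ord_recr big_ord0 /= add0r.
by congr (F _ + F _ + F _); apply/val_inj; rewrite /= inordK.
Qed.

Lemma cmp_mulmx M v i :
  cmp (M *m v) i = M`_(i, 0) * cmp v 0 + M`_(i, 1) * cmp v 1 + M`_(i, 2) * cmp v 2.
Proof. by rewrite /cmp mxE sum_ord3. Qed.

Lemma dotmxE u v :
  (u^T *m v) 0 0 = cmp u 0 * cmp v 0 + cmp u 1 * cmp v 1 + cmp u 2 * cmp v 2.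
Proof. by rewrite mxE sum_ord3 !mxE. Qed.

Lemma det_mx3 M : \det M =
  M`_(0, 0) * (M`_(1, 1) * M`_(2, 2) - M`_(1, 2) * M`_(2, 1))
  - M`_(0, 1) * (M`_(1, 0) * M`_(2, 2) - M`_(1, 2) * M`_(2, 0))
  + M`_(0, 2) * (M`_(1, 0) * M`_(2, 1) - M`_(1, 1) * M`_(2, 0)).
Proof.
have -> : \det M = \det (\matrix_(i < 3, j < 3) M`_(i, j)).
  by congr (\det _); apply/matrixP => i j; rewrite mxE !inord_val.
rewrite (expand_det_row _ 0) !big_ord_recr big_ord0 /= add0r /cofactor.
rewrite !(expand_det_row _ 0) !big_ord_recr !big_ord0 /= !add0r /cofactor.
rewrite !det_mx11 !mxE /= !expr0 !expr1; ring.
Qed.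

Lemma Anti_entry n i j : (Anti n)`_(i, j) = cmp (cross n (delta_mx (inord j) ord0)) i.
Proof. by rewrite mxE. Qed.

End Components.

Ltac vec_ring :=
  apply: eq_vec;
  rewrite /cross ?(cmpE, dotmxE, cmp_mulmx, det_mx3, Anti_entry, cmp_delta, mxE) //=;
  ring.

Section Cross.
Variable R : realFieldType.
Local Notation vec := 'cV[R]_3.
Implicit Types (u v n : vec) (M : 'M[R]_3) (x : R).

Lemma crossZl x u v : cross (x *: u) v = x *: cross u v. Proof. vec_ring. Qed.
Lemma crossvv u : cross u u = 0. Proof. vec_ring. Qed.

Lemma mulmx_cross M u v : M^T *m cross (M *m u) (M *m v) = \det M *: cross u v.
Proof. vec_ring. Qed.

Lemma cross_unitmx M u v : M \in unitmx ->
  cross (M *m u) (M *m v) = \det M *: ((invmx M)^T *m cross u v).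
Proof.
move=> hM; have hMT : M^T \in unitmx by rewrite unitmx_tr.
by rewrite -[cross _ _](mulKmx hMT) mulmx_cross -scalemxAr trmx_inv.
Qed.

Lemma Qm_mul n v : Qm n *m v = - cross n (cross n v).
Proof.
rewrite /Qm /tens mulmxBl -scalemxAl mul1mx -mulmxA [n^T *m v]mx11_scalar.
by rewrite mul_mx_scalar /sqnorm; vec_ring.
Qed.

Lemma Anti_mul n v : Anti n *m v = cross n v.
Proof. vec_ring. Qed.

Lemma Anti_skew n : (Anti n)^T = - Anti n.
Proof.
apply/matrixP => i j; rewrite [LHS]mxE [RHS]mxE.
by case: (ord3P i) => ->; case: (ord3P j) => ->;
  rewrite !Anti_entry /cross !cmpE !cmp_delta //=; ring.
Qed.
End Cross.

Section SymTrace.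
Variable R : realFieldType.
Local Notation vec := 'cV[R]_3.
Implicit Types (u v w n : vec) (P : 'M[R]_3).

Definition symtrace n P : 'M[R]_3 := symm (P *m (Anti n)^T).

Lemma symtrace_is_linear n : linear (symtrace n).
Proof.
move=> c P Q; rewrite /symtrace /symm mulmxDl -scalemxAl.
rewrite [(_ + _)^T]linearD /= [X in _ + (X + _)]linearZ /=.
by rewrite scalerA mulrC -scalerA -scalerDr [c *: (_ + _)]scalerDr addrACA.
Qed.

HB.instance Definition _ n :=
  GRing.isLinear.Build R 'M[R]_3 'M[R]_3 *:%R (symtrace n) (symtrace_is_linear n).

Lemma tensDl u v w : tens (u + v) w = tens u w + tens v w.
Proof. exact: mulmxDl. Qed.

Lemma tensZl (c : R) u w : tens (c *: u) w = c *: tens u w.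
Proof. by rewrite /tens -scalemxAl. Qed.

Lemma symtrace_tens n u w : symtrace n (tens u w) = symm (tens u (cross n w)).
Proof. by rewrite /symtrace /tens -mulmxA -trmx_mul Anti_mul. Qed.

Lemma symtrace_tens_cross0 n u w : cross n w = 0 -> symtrace n (tens u w) = 0.
Proof. by move=> nw0; rewrite symtrace_tens nw0 /tens trmx0 mulmx0 /symm trmx0 addr0 scaler0. Qed.

Lemma symtrace1 n : symtrace n 1%:M = 0.
Proof. by rewrite /symtrace /symm mul1mx trmxK Anti_skew addNr scaler0. Qed.

Lemma symtrace_sum_eq0 n I (r : seq I) (Pr : pred I) (F : I -> 'M[R]_3) :
  (forall i, Pr i -> symtrace n (F i) = 0) -> symtrace n (\sum_(i <- r | Pr i) F i) = 0.
Proof. by move=> F0; rewrite linear_sum big1. Qed.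
End SymTrace.

Lemma sum_inj_codom (V : nmodType) (I J : finType) (f : I -> J) (F : J -> V) :
  injective f -> (forall j, (forall i, f i != j) -> F j = 0) ->
  \sum_j F j = \sum_i F (f i).
Proof.
move=> f_inj F0; rewrite (bigID (mem (f @: setT))) /= [X in _ + X]big1 ?addr0.
  by rewrite big_imset /=; [apply: eq_bigl => i; rewrite inE | move=> ? ? _ _; apply: f_inj].
move=> j /imsetP nfj; apply: F0 => i; apply/eqP => fij; apply: nfj; by exists i.
Qed.

Lemma val_face_edge (k : 'I_4) (r : 'I_3) : val (face_edge k r) =
  nth 0 (nth [::] [:: [:: 0; 1; 3]; [:: 0; 2; 4]; [:: 1; 2; 5]; [:: 3; 4; 5]] k) r.
Proof.
by case: k => -[|[|[|[|//]]]] ?; case: r => -[|[|[|//]]] ?; rewrite /face_edge /= inordK.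
Qed.

Lemma face_edge_inj k : injective (face_edge k).
Proof.
move=> r1 r2 /(congr1 val); rewrite !val_face_edge => h; apply/val_inj; move: h.
by case: k => -[|[|[|[|//]]]] ?; case: r1 => -[|[|[|//]]] ?; case: r2 => -[|[|[|//]]] ?.
Qed.

Definition gface_edge {N} (G : 'I_N * 'I_N * 'I_N) (r : 'I_3) : 'I_N * 'I_N :=
  let: (a, b, c) := G in nth (a, b) [:: (a, b); (a, c); (b, c)] r.

Lemma gedge_face_edge N M (gv : 'I_M -> 'I_4 -> 'I_N) e k r :
  gedge gv e (face_edge k r) = gface_edge (gface gv e k) r.
Proof.
rewrite /gedge /edge_verts val_face_edge.
by case: k => -[|[|[|[|//]]]] ?; case: r => -[|[|[|//]]] ?.
Qed.

Section Reference.
Variable R : realFieldType.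

Definition kappa (k : 'I_4) (j : 'I_6) : 'cV[R]_3 :=
  if cross (nu R k) (kap1 R j) != 0 then kap1 R j else kap2 R j.

Ltac ref_eval := rewrite /nu /tau /kap1 /kap2 /ref_e123 /ref_e1 /ref_e2 /ref_e3 ?val_face_edge /=.

Lemma nu_cross k : nu R k = cross (tau R (face_edge k (inord 0))) (tau R (face_edge k (inord 1))).
Proof. by case: k => -[|[|[|[|//]]]] ?; ref_eval; rewrite !inordK //; vec_ring. Qed.

(* Decide the branch of [kappa] by refuting the wrong one through a component of the
   concrete vector [nu k x kap1 j], then compute. *)
Ltac kappa_eval :=
  rewrite /kappa; case: eqP => /=; ref_eval;
  first [ move=> /(congr1 (fun v => (cmp v 0, cmp v 1, cmp v 2)));
          rewrite /cross !cmpE => -[] *; exfalso; lra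
        | move=> _; vec_ring
        | by case; vec_ring ].

Lemma cross_nu_kappa k r : cross (nu R k) (kappa k (face_edge k r)) = tau R (face_edge k r).
Proof. by case: k => -[|[|[|[|//]]]] ?; case: r => -[|[|[|//]]] ?; kappa_eval. Qed.

Lemma cross_nu_kappa_other k k2 r r2 : k2 != k -> face_edge k2 r2 = face_edge k r ->
  cross (nu R k) (kappa k2 (face_edge k2 r2)) = 0.
Proof.
move=> + /(congr1 val); rewrite !val_face_edge.
by case: k => -[|[|[|[|//]]]] ?; case: k2 => -[|[|[|[|//]]]] ?;
  case: r => -[|[|[|//]]] ?; case: r2 => -[|[|[|//]]] ? //= _ _; kappa_eval.
Qed.
End Reference.

Section ElementGeometry.
Variables (R : realFieldType) (N M : nat) (X : 'I_N -> 'cV[R]_3).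
Variables (gv : 'I_M -> 'I_4 -> 'I_N) (e : 'I_M).
Hypothesis det_Jm : \det (Jm X gv e) != 0.
Local Notation J := (Jm X gv e).
Local Notation vertex := (vtx X gv e).
Local Notation tvec := (tvec X gv e).
Local Notation nvec := (nvec X gv e).
Local Notation kvec := (kvec X gv e).

Lemma Jm_mul v : J *m v =
  cmp v 0 *: (vertex 4 - vertex 1) + cmp v 1 *: (vertex 3 - vertex 1)
  + cmp v 2 *: (vertex 2 - vertex 1).
Proof. apply: eq_vec; rewrite !cmp_mulmx !cmpE !mxE /= !inordK //= /cmp !mxE; ring. Qed.

Lemma tvec_gedge j : tvec j = X (gedge gv e j).2 - X (gedge gv e j).1.
Proof.
rewrite /tvec Jm_mul /gedge /edge_verts /vtx.
by case: j => -[|[|[|[|[|[|//]]]]]] ? /=; rewrite /tau /ref_e1 /ref_e2 /ref_e3 /=; vec_ring.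
Qed.

Lemma Jm_unit : J \in unitmx.
Proof. by rewrite unitmxE unitfE. Qed.

Lemma nvec_tvec k : nvec k = cross (tvec (face_edge k (inord 0))) (tvec (face_edge k (inord 1))).
Proof. by rewrite /tvec cross_unitmx ?Jm_unit // -nu_cross. Qed.

Lemma cross_nvec_JiT k v : cross (nvec k) (JiT X gv e *m v) = J *m cross (nu R k) v.
Proof.
have JiT_unit : JiT X gv e \in unitmx by rewrite unitmx_tr unitmx_inv Jm_unit.
rewrite /nvec crossZl cross_unitmx // /JiT det_tr det_inv trmx_inv trmxK invmxK.
by rewrite scalerA mulfV // scale1r.
Qed.

Lemma kvec_kappa k j : kvec k j = JiT X gv e *m kappa R k j.
Proof.
have J_eq0 w : (J *m w == 0) = (w == 0).
  by apply/eqP/eqP => [Jw0 | ->]; [rewrite -(mulKmx Jm_unit w) Jw0 mulmx0 | rewrite mulmx0].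
by rewrite /kvec /kappa /= cross_nvec_JiT J_eq0; case: ifP.
Qed.

Lemma cross_nvec_kvec k r : cross (nvec k) (kvec k (face_edge k r)) = tvec (face_edge k r).
Proof. by rewrite kvec_kappa cross_nvec_JiT cross_nu_kappa. Qed.

Lemma cross_nvec_kvec_other k k2 r r2 : k2 != k -> face_edge k2 r2 = face_edge k r ->
  cross (nvec k) (kvec k2 (face_edge k2 r2)) = 0.
Proof.
move=> k2k same_edge.
by rewrite kvec_kappa cross_nvec_JiT (cross_nu_kappa_other R k2k same_edge) mulmx0.
Qed.

Lemma mvec_face_edge k r : mvec X gv e k (face_edge k r) = - cross (nvec k) (tvec (face_edge k r)).
Proof. by rewrite /mvec Qm_mul cross_nvec_kvec. Qed.
End ElementGeometry.

Section GlobalFace.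
Variables (R : realFieldType) (N M : nat) (X : 'I_N -> 'cV[R]_3) (gv : 'I_M -> 'I_4 -> 'I_N).
Implicit Types (G : 'I_N * 'I_N * 'I_N).

Definition face_tangent G r : 'cV[R]_3 := X (gface_edge G r).2 - X (gface_edge G r).1.
Definition face_normal G : 'cV[R]_3 := cross (face_tangent G (inord 0)) (face_tangent G (inord 1)).

Lemma tvec_face_edge e k r : tvec X gv e (face_edge k r) = face_tangent (gface gv e k) r.
Proof. by rewrite tvec_gedge gedge_face_edge. Qed.

Lemma nvec_face_normal e k : \det (Jm X gv e) != 0 -> nvec X gv e k = face_normal (gface gv e k).
Proof. by move=> det_Jm; rewrite nvec_tvec // !tvec_face_edge. Qed.

Lemma faceSet_gface e e' k k' :
  gface gv e k = gface gv e' k' -> faceSet X gv e k = faceSet X gv e' k'.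
Proof.
rewrite /faceSet /gface.
by case: (face_verts k) => [[a b] c]; case: (face_verts k') => [[a' b'] c'] [-> -> ->].
Qed.
End GlobalFace.

Section ElementFunctions.
Variables (R : realFieldType) (N M : nat) (X : 'I_N -> 'cV[R]_3) (gv : 'I_M -> 'I_4 -> 'I_N).
Variables (S : scalarFam R M) (A : coeffs R N M) (p : nat) (x : 'cV[R]_3).
Local Notation vec := 'cV[R]_3.
Local Notation tvec := (tvec X gv).
Local Notation nvec := (nvec X gv).
Local Notation kvec := (kvec X gv).
Local Notation mvec := (mvec X gv).
Implicit Types (e : 'I_M) (G : 'I_N * 'I_N * 'I_N) (t m n : vec).

Definition edge_mx (E : 'I_N * 'I_N) t i : 'M[R]_3 :=
  aE A E i 0 *: tens (dvec1 t) t + aE A E i 1 *: tens (dvec2 t) t.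

Definition edge_face_mx G (E : 'I_N * 'I_N) t kk m n i : 'M[R]_3 :=
  aEF A G E i 0 *: tens t kk + aEF A G E i 1 *: tens m kk + aEF A G E i 2 *: tens n kk.

Definition face_mx G t m n i : 'M[R]_3 :=
  aF A G i 0 *: tens t m + aF A G i 1 *: tens m t + aF A G i 2 *: (tens t t - tens m m)
  + aF A G i 3 *: tens n t + aF A G i 4 *: tens n m.

Definition edge_part e : 'M[R]_3 :=
  \sum_(j < 6) \sum_(i < dimE p) sE S p e j i x *: edge_mx (gedge gv e j) (tvec e j) i.

Definition edge_face_part e : 'M[R]_3 :=
  \sum_(k < 4) \sum_(r < 3) \sum_(i < dimE p)
    (let j := face_edge k r in
     sE S p e j i x *: edge_face_mx (gface gv e k) (gedge gv e j)
                         (tvec e j) (kvec e k j) (mvec e k j) (nvec e k) i).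

Definition face_part e : 'M[R]_3 :=
  \sum_(k < 4) \sum_(i < dimF p)
    (let j := min_face_edge k in
     sF S p e k i x *: face_mx (gface gv e k) (tvec e j) (mvec e k j) (nvec e k) i).

Definition cell_part e : 'M[R]_3 :=
  \sum_(j < 6) \sum_(i < dimE p.+1) (sE S p.+1 e j i x * aCE A e j i) *: 1%:M
  + \sum_(k < 4) \sum_(i < dimF p.+1) (sF S p.+1 e k i x * aCF A e k i) *: 1%:M
  + \sum_(i < dimC p.+1) (sC S p.+1 e i x * aCC A e i) *: 1%:M
  + \sum_(k < 4) \sum_(i < dimF p)
     (let j := min_face_edge k in
      let t := tvec e j in let m := mvec e k j in let n := nvec e k in
      sF S p e k i x *: (aCn A e k i 0 *: tens t n + aCn A e k i 1 *: tens m n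
                        + aCn A e k i 2 *: tens n n))
  + \sum_(i < dimC p) sC S p e i x *: aCT A e i.

Lemma Pelem_split e :
  Pelem X gv S A p e x = edge_part e + edge_face_part e + face_part e + cell_part e.
Proof. by rewrite /cell_part !addrA. Qed.

Definition edge_trace G (vE : 'I_3 -> nat -> R) : 'M[R]_3 :=
  \sum_(r < 3) \sum_(i < dimE p)
     vE r i *: symtrace (face_normal X G) (edge_mx (gface_edge G r) (face_tangent X G r) i).

Definition edge_face_trace G (vE : 'I_3 -> nat -> R) : 'M[R]_3 :=
  \sum_(r < 3) \sum_(i < dimE p)
     (let t := face_tangent X G r in let n := face_normal X G in let E := gface_edge G r in
      vE r i *: symm (tens (aEF A G E i 0 *: t + aEF A G E i 1 *: - cross n t
                            + aEF A G E i 2 *: n) t)).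

Definition face_trace G (vF : nat -> R) : 'M[R]_3 :=
  \sum_(i < dimF p)
     (let t := face_tangent X G (inord 0) in let n := face_normal X G in
      vF i *: symtrace n (face_mx G t (- cross n t) n i)).

Definition face_jump G vE vF : 'M[R]_3 := edge_trace G vE + edge_face_trace G vE + face_trace G vF.

Lemma eq_face_jump G (vE vE' : 'I_3 -> nat -> R) (vF vF' : nat -> R) :
  (forall r (i : 'I_(dimE p)), vE r i = vE' r i) -> (forall i : 'I_(dimF p), vF i = vF' i) ->
  face_jump G vE vF = face_jump G vE' vF'.
Proof.
move=> eqE eqF; rewrite /face_jump /edge_trace /edge_face_trace /face_trace.
by congr (_ + _ + _); apply: eq_bigr => *; rewrite ?eqF //; apply: eq_bigr => *; rewrite eqE.
Qed.

Section OnFace.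
Variables (e : 'I_M) (k : 'I_4).
Hypotheses (det_Jm : \det (Jm X gv e) != 0) (poly_e : polytopal_q X gv S p e).
Hypothesis on_face : faceSet X gv e k x.
Local Notation n := (nvec e k).
Local Notation G := (gface gv e k).
Local Notation vE := (fun r i => sE S p e (face_edge k r) i x).

Lemma symtrace_edge_part : symtrace n (edge_part e) = edge_trace G vE.
Proof.
have [vanishE _ _] := poly_e.
rewrite linear_sum (sum_inj_codom (@face_edge_inj k)) => [|j off_face].
  apply: eq_bigr => r _; rewrite linear_sum; apply: eq_bigr => i _.
  by rewrite linearZ /= tvec_face_edge gedge_face_edge nvec_face_normal.
apply: symtrace_sum_eq0 => i _.
by rewrite (proj2 (vanishE j i (ltn_ord i)) k off_face x on_face) scale0r linear0.
Qed.

Lemma symtrace_edge_face_part : symtrace n (edge_face_part e) = edge_face_trace G vE.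
Proof.
have [vanishE _ _] := poly_e.
rewrite linear_sum (bigD1 k) //= [X in _ + X]big1 ?addr0 => [|k2 k2k].
  rewrite linear_sum; apply: eq_bigr => r _; rewrite linear_sum; apply: eq_bigr => i _.
  rewrite linearZ /= /edge_face_mx -!tensZl -!tensDl symtrace_tens cross_nvec_kvec //.
  by rewrite mvec_face_edge // tvec_face_edge gedge_face_edge nvec_face_normal.
apply: symtrace_sum_eq0 => r _; apply: symtrace_sum_eq0 => i _.
rewrite linearZ /= /edge_face_mx -!tensZl -!tensDl.
have [r' /eqP same_edge | off_face] := pickP (fun r' => face_edge k r' == face_edge k2 r).
  by rewrite symtrace_tens_cross0 ?scaler0 // (cross_nvec_kvec_other det_Jm k2k (esym same_edge)).
have {}off_face r' : face_edge k r' != face_edge k2 r by rewrite off_face.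
by rewrite (proj2 (vanishE _ i (ltn_ord i)) k off_face x on_face) scale0r.
Qed.

Lemma symtrace_face_part : symtrace n (face_part e) = face_trace G (fun i => sF S p e k i x).
Proof.
have [_ vanishF _] := poly_e.
rewrite linear_sum (bigD1 k) //= [X in _ + X]big1 ?addr0 => [|k2 k2k].
  rewrite linear_sum; apply: eq_bigr => i _.
  by rewrite linearZ /= /min_face_edge mvec_face_edge // tvec_face_edge nvec_face_normal.
apply: symtrace_sum_eq0 => i _.
by rewrite (vanishF k2 i (ltn_ord i) k _ x on_face) ?scale0r ?linear0 // eq_sym.
Qed.

Lemma symtrace_cell_part : symtrace n (cell_part e) = 0.
Proof.
have [_ vanishF vanishC] := poly_e.
have symtrace_scalar c : symtrace n (c *: 1%:M) = 0.
  by rewrite linearZ /= symtrace1 scaler0.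
rewrite /cell_part !linearD /=.
rewrite !symtrace_sum_eq0 ?addr0 // => [i _|k2 _|k2 _|j _].
- by rewrite (vanishC i (ltn_ord i) k x on_face) scale0r linear0.
- apply: symtrace_sum_eq0 => i _; rewrite linearZ /=.
  have [->|k2k] := eqVneq k2 k; last first.
    by rewrite (vanishF k2 i (ltn_ord i) k _ x on_face) ?scale0r // eq_sym.
  by rewrite -!tensZl -!tensDl symtrace_tens_cross0 ?crossvv ?scaler0.
- by apply: symtrace_sum_eq0 => i _; apply: symtrace_scalar.
- by apply: symtrace_sum_eq0 => i _; apply: symtrace_scalar.
Qed.

Lemma symtrace_Pelem :
  symtrace n (Pelem X gv S A p e x) = face_jump G vE (fun i => sF S p e k i x).
Proof.
rewrite Pelem_split linearD /= symtrace_cell_part addr0 !linearD /=.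
by rewrite symtrace_edge_part symtrace_edge_face_part symtrace_face_part.
Qed.
End OnFace.
End ElementFunctions.

Unset Implicit Arguments.

Theorem mainTheorem4 (R : realFieldType) (N M : nat) (X : 'I_N -> 'cV[R]_3)
  (gv : 'I_M -> 'I_4 -> 'I_N) (p : nat) (S : scalarFam R M) (A : coeffs R N M) :
  (2 <= p)%N ->
  mesh_ok X gv ->
  scalar_ok X gv S p ->
  coeffs_ok A p ->
  forall (e e' : 'I_M) (k k' : 'I_4), e != e' -> gface gv e k = gface gv e' k' ->
  forall x, faceSet X gv e k x ->
    symm (Pelem X gv S A p e x *m (Anti (nvec X gv e k))^T)
    = symm (Pelem X gv S A p e' x *m (Anti (nvec X gv e k))^T).
Proof.
move=> _ [_ det_Jm _ _] [_ scalar_ok_q] _ e e' k k' _ same_face x on_face.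
have := scalar_ok_q p; rewrite eqxx => /(_ isT) [elem_ok shared].
have on_face' : faceSet X gv e' k' x by rewrite -(faceSet_gface X same_face).
have same_normal : nvec X gv e k = nvec X gv e' k'.
  by rewrite !nvec_face_normal ?det_Jm // same_face.
have [sharedE sharedF] := shared e e' k k' same_face x on_face.
change (symtrace (nvec X gv e k) (Pelem X gv S A p e x)
  = symtrace (nvec X gv e k) (Pelem X gv S A p e' x)).
rewrite [in RHS]same_normal.
rewrite (symtrace_Pelem A (det_Jm e) (proj2 (elem_ok e)) on_face).
rewrite (symtrace_Pelem A (det_Jm e') (proj2 (elem_ok e')) on_face') same_face.
by apply: eq_face_jump => [r i|i]; [apply: sharedE | apply: sharedF].
Qed.
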